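(* Let $(X,\rho)$ be an $F$-space and $(Y,d)$ a metric vector space with translation-invariant non-decreasing metric $d$. Let $T:X\to Y$ and $T_n:X\to Y$ ($n\in\mathbb{N}$) be continuous linear operators. The following are equivalent: (i) $T_nx\to Tx$ for every $x\in X$, but $\{T_n\}$ does not converge almost arbitrarily slowly to $T$; (ii) there exist $\{\varepsilon_n\}\searrow0$ and $r_0>0$ such that $(T_n-T)(B_\rho(0,r_0))\subseteq B_d(0,\varepsilon_n)$ for all $n\in\mathbb{N}$. In particular, if (i) holds then $\{T_n\}$ converges to $T$ in the topology of bounded convergence. Finally, if $X$ is locally bounded, then (i) and (ii) are equivalent to (iii) $\{T_n\}$ converges to $T$ in the topology of bounded convergence.
   Context: An $F$-space is a complete metric vector space with translation-invariant metric. $d$ is non-decreasing if $d(\alpha y,0)\le d(y,0)$ for $0\le\alpha\le1$. $B_\rho(x,r)=\{z:\rho(x,z)\le r\}$, similarly $B_d$. A sequence of operators $T_n$ converges almost arbitrarily slowly to $T$ if (C1) $\lim_n d(T_nx,Tx)=0$ for all $x\in X$ and (C2) for every non-increasing sequence $\{\varepsilon_n\}$ of nonnegative reals tending to $0$ there exists $x\in X$ with $d(T_nx,Tx)\ge\varepsilon_n$ for infinitely many $n$. The topology of bounded convergence is the topology of uniform convergence on bounded subsets of $X$, where $A\subseteq X$ is bounded if for every $r>0$ there is $\lambda>0$ with $A\subseteq\lambda B_\rho(0,r)$. $\{\varepsilon_n\}\searrow0$ means a non-increasing sequence of nonnegative reals converging to $0$. *)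

From HB Require Import structures.
From mathcomp Require Import all_boot all_order all_algebra.
From mathcomp Require Import reals.
Set Implicit Arguments. Unset Strict Implicit. Unset Printing Implicit Defensive.
Import Order.TTheory GRing.Theory Num.Theory.
Local Open Scope ring_scope.

Section Defs.
Variable R : realType.

Definition is_metric (V : Type) (rho : V -> V -> R) : Prop :=
  (forall x y, 0 <= rho x y) /\
  (forall x y, rho x y = 0 <-> x = y) /\
  (forall x y, rho x y = rho y x) /\
  (forall x y z, rho x z <= rho x y + rho y z).

Definition transl_inv (V : lmodType R) (rho : V -> V -> R) : Prop :=
  forall x y z, rho (x + z) (y + z) = rho x y.

Definition scale_continuous (V : lmodType R) (rho : V -> V -> R) : Prop :=
  forall (a : R) (x : V) (e : R), 0 < e -> exists2 del : R, 0 < del &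
    forall (b : R) (y : V), `|b - a| < del -> rho y x < del ->
      rho (b *: y) (a *: x) < e.

(* metric vector space with translation-invariant metric
   (addition is then automatically continuous) *)
Definition is_tinv_metric_vector_space (V : lmodType R) (rho : V -> V -> R) :=
  [/\ is_metric rho, transl_inv rho & scale_continuous rho].

Definition cauchy_seq (V : Type) (rho : V -> V -> R) (u : nat -> V) : Prop :=
  forall e : R, 0 < e -> exists N, forall m n, (N <= m)%N -> (N <= n)%N ->
    rho (u m) (u n) < e.

Definition converges_to (V : Type) (rho : V -> V -> R) (u : nat -> V) (l : V) :=
  forall e : R, 0 < e -> exists N, forall n, (N <= n)%N -> rho (u n) l < e.

Definition complete_metric (V : Type) (rho : V -> V -> R) : Prop :=
  forall u, cauchy_seq rho u -> exists l, converges_to rho u l.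

Definition is_Fspace (V : lmodType R) (rho : V -> V -> R) : Prop :=
  is_tinv_metric_vector_space rho /\ complete_metric rho.

Definition nondecreasing_metric (V : lmodType R) (d : V -> V -> R) : Prop :=
  forall (alpha : R) (y : V), 0 <= alpha <= 1 -> d (alpha *: y) 0 <= d y 0.

Definition cball (V : Type) (rho : V -> V -> R) (x : V) (r : R) : V -> Prop :=
  fun z => rho x z <= r.

Definition continuous_op (V W : Type) (rho : V -> V -> R) (d : W -> W -> R)
  (f : V -> W) : Prop :=
  forall x (e : R), 0 < e -> exists2 del : R, 0 < del &
    forall y, rho x y < del -> d (f x) (f y) < e.

Definition bounded_set (V : lmodType R) (rho : V -> V -> R) (A : V -> Prop) :=
  forall r : R, 0 < r -> exists2 lambda : R, 0 < lambda &
    forall a, A a -> exists2 z : V, cball rho 0 r z & a = lambda *: z.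

Definition locally_bounded (V : lmodType R) (rho : V -> V -> R) : Prop :=
  exists2 r : R, 0 < r & bounded_set rho (cball rho 0 r).

Definition decr_to_zero (eps : nat -> R) : Prop :=
  (forall n, 0 <= eps n) /\ (forall n, eps n.+1 <= eps n) /\
  (forall e : R, 0 < e -> exists N, forall n, (N <= n)%N -> eps n < e).

Definition pointwise_conv (V W : Type) (d : W -> W -> R)
  (Tn : nat -> V -> W) (T : V -> W) : Prop :=
  forall x, converges_to d (fun n => Tn n x) (T x).

Definition aas_conv (V W : Type) (d : W -> W -> R)
  (Tn : nat -> V -> W) (T : V -> W) : Prop :=
  pointwise_conv d Tn T /\
  forall eps : nat -> R, decr_to_zero eps ->
    exists x, forall N, exists2 n, (N <= n)%N & eps n <= d (Tn n x) (T x).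

(* convergence in the topology of bounded convergence, i.e. uniform
   convergence on bounded subsets of V *)
Definition bounded_conv (V W : lmodType R) (rho : V -> V -> R) (d : W -> W -> R)
  (Tn : nat -> V -> W) (T : V -> W) : Prop :=
  forall A, bounded_set rho A ->
    forall e : R, 0 < e -> exists N, forall n, (N <= n)%N ->
      forall x, A x -> d (Tn n x) (T x) < e.

End Defs.

(* Write S_n = T_n - T.  Under (ii), if x/k lies in the ball B(0, r0) then
   subadditivity of d(., 0) gives d(S_n x, 0) <= k eps_n; this yields pointwise
   convergence, defeats (C2) for the slower null sequence sqrt(eps_n) + 1/(n+1),
   and, as the metric is non-decreasing, gives uniform convergence on bounded
   sets.  Conversely, if S_n -> 0 uniformly on some ball, shrinking the ball
   handles the finitely many early S_n by continuity, and the tail suprema of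
   d(S_m x, 0) over m >= n and the ball are the required eps_n.  If S_n -> 0
   uniformly on no ball, a gliding hump in the complete space X produces, for
   every null sequence eps_n, a point x with d(S_n x, 0) >= eps_n infinitely
   often, i.e. the convergence is almost arbitrarily slow. *)

From HB Require Import structures.
From mathcomp Require Import all_boot all_order all_algebra.
From mathcomp Require Import boolp classical_sets reals.
From mathcomp Require Import lra.
Import Order.TTheory GRing.Theory Num.Theory.
Local Open Scope ring_scope.
Local Open Scope classical_set_scope.
Set Implicit Arguments. Unset Strict Implicit.

Lemma dependent_choice (T : Type) (Q : T -> Prop) (P : T -> T -> Prop) (t0 : T) :
  Q t0 -> (forall t, Q t -> exists2 t', Q t' & P t t') ->
  exists2 f : nat -> T, f 0%N = t0 & forall n, Q (f n) /\ P (f n) (f n.+1).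
Proof.
move=> Qt0 step.
have /choice[g gP] : forall t, exists t', Q t -> Q t' /\ P t t'.
  move=> t; have [/step[t' Qt' Ptt']|nQt] := pselect (Q t); first by exists t'.
  by exists t => /nQt.
exists (fun n => iter n g t0) => // n.
have Qn : Q (iter n g t0) by elim: n => //= n /gP[].
by split => //; case: (gP _ Qn).
Qed.

Section RealSequences.
Variable R : realType.

Lemma exists_nat_gt (x : R) : exists k : nat, x < k%:R.
Proof.
exists (Num.Def.archi_bound `|x|); apply: le_lt_trans (ler_norm x) _.
exact: archi_boundP.
Qed.

Lemma invSn_lt (e : R) : 0 < e ->
  exists N, forall n, (N <= n)%N -> (n.+1%:R : R)^-1 < e.
Proof.
move=> e0; have [k hk] := exists_nat_gt e^-1; exists k => n hn.
rewrite -[e]invrK ltf_pV2 ?posrE ?invr_gt0 ?ltr0Sn //.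
by apply: lt_le_trans hk _; rewrite ler_nat; exact: leqW.
Qed.

Lemma decr_to_zero_tail_sup (I : Type) (P : I -> Prop) (f : nat -> I -> R) :
  (exists i, P i) -> (forall n i, P i -> 0 <= f n i <= 1) ->
  (forall e, 0 < e -> exists N, forall n i, (N <= n)%N -> P i -> f n i <= e) ->
  exists2 eps, decr_to_zero eps & forall n i, P i -> f n i <= eps n.
Proof.
move=> [i0 Pi0] f01 f_unif.
pose E n := [set t | exists m i, [/\ (n <= m)%N, P i & t = f m i]].
have E_f n i : P i -> E n (f n i) by exists n, i.
have E_ub n : ubound (E n) 1 by move=> _ [m [i [_ Pi ->]]]; case/andP: (f01 m i Pi).
have E_ne n : E n !=set0 by exists (f n i0); exact: E_f.
have le_supE n t : E n t -> t <= sup (E n).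
  by move=> Et; apply: sup_upper_bound => //; split; [exists t | exists 1].
exists (fun n => sup (E n)); last by move=> n i Pi; exact/le_supE/E_f.
split.
  move=> n; apply: le_trans (le_supE n _ (E_f n i0 Pi0)).
  by case/andP: (f01 n i0 Pi0).
split.
  move=> n; apply: ge_sup => // _ [m [i [nm Pi ->]]].
  by apply: le_supE; exists m, i; split => //; exact: ltnW.
move=> e e0; have [N HN] := f_unif (e / 2) (divr_gt0 e0 (ltr0Sn _ 1)).
exists N => n Nn; apply: le_lt_trans (_ : e / 2 < e); last first.
  by rewrite ltr_pdivrMr // ltr_pMr // ltr1n.
apply: ge_sup => // _ [m [i [nm Pi ->]]]; apply: HN => //; exact: leq_trans nm.
Qed.

(* The summand [1 / (n + 1)] makes the domination strict where [eps n = 0]. *)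
Lemma decr_to_zero_slower (eps : nat -> R) : decr_to_zero eps ->
  exists2 eps', decr_to_zero eps' &
    forall k, exists N, forall n, (N <= n)%N -> eps n *+ k < eps' n.
Proof.
move=> [eps_ge0 [eps_decr eps_lim]].
exists (fun n => Num.sqrt (eps n) + (n.+1%:R)^-1).
  split; first by move=> n; rewrite addr_ge0 ?sqrtr_ge0 ?invr_ge0 ?ler0n.
  split.
    move=> n; apply: lerD; first exact: ler_wsqrtr.
    by rewrite lef_pV2 ?posrE ?ltr0Sn // ler_nat.
  move=> e e0; have e20 : 0 < e / 2 by rewrite divr_gt0.
  have [N1 H1] := eps_lim _ (mulr_gt0 e20 e20).
  have [N2 H2] := invSn_lt e20.
  exists (maxn N1 N2) => n; rewrite geq_max => /andP[h1 h2].
  rewrite [e](splitr e); apply: ltrD; last exact: H2.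
  have := H1 _ h1; have := sqr_sqrtr (eps_ge0 n); have := sqrtr_ge0 (eps n).
  move: (e / 2) e20 (eps n) (Num.sqrt (eps n)) => f f0 a s.
  by rewrite expr2 => s0 <-; nra.
move=> k; pose K : R := k.+1%:R.
have K0 : 0 < K by rewrite ltr0Sn.
have sqrt_dom a : 0 <= a -> a * (K * K) < 1 -> a * k%:R <= Num.sqrt a.
  move=> a0; have := sqr_sqrtr a0; have := sqrtr_ge0 a; have := ler0n R k.
  rewrite /K -natr1 expr2; move: (Num.sqrt a) (k%:R : R) => s kk kk0 s0 <- hs.
  have sK1 : s * (kk + 1) < 1 by nra.
  nra.
have KK0 : 0 < (K * K)^-1 by rewrite invr_gt0 mulr_gt0.
have [N HN] := eps_lim _ KK0.
exists N => n /HN; rewrite -[X in _ < X]div1r ltr_pdivlMr ?mulr_gt0 // => hn.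
rewrite -[eps n *+ k]mulr_natr; apply: le_lt_trans (sqrt_dom _ (eps_ge0 n) hn) _.
by rewrite ltrDl invr_gt0 ltr0Sn.
Qed.

End RealSequences.

Section Metric.
Variables (R : realType) (V : Type) (m : V -> V -> R).
Hypothesis m_metric : is_metric m.

Lemma metric_ge0 x y : 0 <= m x y. Proof. by case: m_metric. Qed.
Lemma metric_sym x y : m x y = m y x. Proof. by case: m_metric => _ [_ []]. Qed.
Lemma metric_xx x : m x x = 0. Proof. by case: m_metric => _ [+ _] => ->. Qed.
Lemma metric_triangle x y z : m x z <= m x y + m y z.
Proof. by case: m_metric => _ [_ [_]]. Qed.

Lemma cball_closed c r (u : nat -> V) l N :
  converges_to m u l -> (forall k, (N <= k)%N -> cball m c r (u k)) ->
  cball m c r l.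
Proof.
move=> ul uB; apply/ler_addgt0Pr => e e0; have [M HM] := ul e e0.
apply: le_trans (metric_triangle c (u (maxn M N)) l) _.
by apply: lerD; [apply: uB; exact: leq_maxr | exact/ltW/HM/leq_maxl].
Qed.

Section HalvingSteps.
Variables (s : nat -> V) (r : nat -> R).
Hypotheses (r_gt0 : forall k, 0 < r k) (r_half : forall k, r k.+1 <= r k / 2)
  (s_step : forall k, m (s k) (s k.+1) <= r k).

Lemma halving_dist k j : m (s k) (s (k + j)) <= 2 * r k - 2 * r (k + j).
Proof.
elim: j => [|j IH]; first by rewrite addn0 metric_xx subrr.
apply: le_trans (metric_triangle _ (s (k + j)) _) _.
by rewrite addnS; have := s_step (k + j); have := r_half (k + j); lra.
Qed.

Lemma halving_dist_le k j : (k <= j)%N -> m (s k) (s j) <= 2 * r k.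
Proof.
move=> /subnKC <-; apply: le_trans (halving_dist k (j - k)) _.
by have := r_gt0 (k + (j - k)); lra.
Qed.

Lemma halving_radius_small k : r k * k.+1%:R <= r 0.
Proof.
elim: k => [|k IH]; first by rewrite mulr1.
have := r_half k; have := r_gt0 k; have := ler0n R k.
move: IH; rewrite -(natr1 k.+1) -(natr1 k).
move: (r k) (r k.+1) (k%:R : R) => a b kk; nra.
Qed.

Lemma halving_cauchy : cauchy_seq m s.
Proof.
move=> e e0; have [N HN] := invSn_lt (divr_gt0 (divr_gt0 e0 (ltr0Sn R 3)) (r_gt0 0)).
have rN : r N < e / 4.
  have : r N <= r 0 / N.+1%:R by rewrite ler_pdivlMr ?ltr0Sn // halving_radius_small.
  have := HN N (leqnn N); rewrite ltr_pdivlMr // [_ * r 0]mulrC => h1 h2.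
  exact: le_lt_trans h2 h1.
exists N => i j Ni Nj; apply: le_lt_trans (metric_triangle _ (s N) _) _.
by rewrite metric_sym; have := halving_dist_le Ni; have := halving_dist_le Nj; lra.
Qed.

End HalvingSteps.
End Metric.

Section TranslationInvariantMetric.
Variables (R : realType) (V : lmodType R) (m : V -> V -> R).
Hypotheses (m_metric : is_metric m) (m_tinv : transl_inv m).

Lemma tinv_distE x y : m x y = m 0 (y - x).
Proof. by rewrite -(m_tinv 0 (y - x) x) add0r subrK. Qed.

Lemma tinv_dist0N y : m 0 (- y) = m 0 y.
Proof. by rewrite -(m_tinv 0 (- y) y) add0r addNr metric_sym. Qed.

Lemma tinv_dist0D y z : m 0 (y + z) <= m 0 y + m 0 z.
Proof.
apply: le_trans (metric_triangle m_metric 0 z (y + z)) _.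
by rewrite (tinv_distE z) addrK addrC.
Qed.

Lemma tinv_dist0Mn y k : m 0 (y *+ k) <= m 0 y *+ k.
Proof.
elim: k => [|k IH]; first by rewrite !mulr0n metric_xx.
by rewrite !mulrS; apply: le_trans (tinv_dist0D _ _) _; exact: lerD.
Qed.

End TranslationInvariantMetric.

Lemma scale_continuous_absorbing (R : realType) (V : lmodType R)
    (m : V -> V -> R) (x : V) (r : R) :
  is_metric m -> scale_continuous m -> 0 < r ->
  exists2 k : nat, (0 < k)%N & m 0 (k%:R^-1 *: x) <= r.
Proof.
move=> m_metric m_scale r0; have [del del0 Hdel] := m_scale 0 x r r0.
have [k hk] := exists_nat_gt del^-1.
have k0 : (0 < k)%N by rewrite -(ltr_nat R); apply: lt_trans hk; rewrite invr_gt0.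
exists k => //; rewrite metric_sym //; apply/ltW.
rewrite -[0 in X in m _ X](scale0r x); apply: Hdel; last by rewrite metric_xx.
rewrite subr0 ger0_norm ?invr_ge0 ?ler0n //.
by rewrite -[del]invrK ltf_pV2 ?posrE ?invr_gt0 ?ltr0n.
Qed.

Section Operators.
Variables (R : realType) (X Y : lmodType R) (rho : X -> X -> R) (d : Y -> Y -> R)
  (T : {linear X -> Y}) (Tn : nat -> {linear X -> Y}).
Hypotheses (rho_metric : is_metric rho) (rho_tinv : transl_inv rho)
  (d_metric : is_metric d) (d_tinv : transl_inv d)
  (T_cont : continuous_op rho d T) (Tn_cont : forall n, continuous_op rho d (Tn n)).

Local Notation S n := (Tn n \- T).

Lemma dist_Tn_T n x : d (Tn n x) (T x) = d 0 (S n x).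
Proof. by rewrite metric_sym // tinv_distE // tinv_dist0N // opprB. Qed.

Lemma diff_continuous0 n e : 0 < e ->
  exists2 del, 0 < del & forall x, rho 0 x < del -> d 0 (S n x) < e.
Proof.
move=> e0; have e20 : 0 < e / 2 by rewrite divr_gt0.
have [del1 del10 H1] := Tn_cont n 0 e20; have [del2 del20 H2] := T_cont 0 e20.
exists (Num.min del1 del2); first by rewrite lt_min del10 del20.
move=> x; rewrite lt_min => /andP[/H1 hTn /H2 hT]; rewrite !linear0 in hTn hT.
apply: le_lt_trans (tinv_dist0D d_metric d_tinv _ _) _.
by rewrite tinv_dist0N // [e](splitr e) ltrD.
Qed.

Definition unif_conv_ball r := forall c, 0 < c -> exists N, forall n, (N <= n)%N ->
  forall x, rho 0 x <= r -> d 0 (S n x) <= c.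

Definition rate_on_ball := exists eps : nat -> R, decr_to_zero eps /\
  exists2 r0 : R, 0 < r0 &
    forall n x, cball rho 0 r0 x -> cball d 0 (eps n) (Tn n x - T x).

Lemma small_ball_bound N r : 0 < r -> exists2 r1, 0 < r1 <= r &
  forall n x, (n < N)%N -> rho 0 x <= r1 -> d 0 (S n x) <= 1.
Proof.
move=> r0; elim: N => [|N [r1 /andP[r10 r1r] IH]]; first by exists r; rewrite ?r0 ?lexx.
have [del del0 Hdel] := diff_continuous0 N ltr01.
exists (Num.min r1 (del / 2)).
  by rewrite lt_min r10 divr_gt0 //= ge_min r1r.
move=> n x; rewrite ltnS leq_eqVlt le_min => /orP[/eqP-> | nN] /andP[xr1 xdel].
  by apply/ltW/Hdel; apply: le_lt_trans xdel _; rewrite ltr_pdivrMr // ltr_pMr // ltr1n.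
exact: IH.
Qed.

Lemma unif_conv_ball_rate r : 0 < r -> unif_conv_ball r -> rate_on_ball.
Proof.
move=> r0 Ur; have [N1 HN1] := Ur 1 ltr01.
have [r1 /andP[r10 r1r] Hr1] := small_ball_bound N1 r0.
have [eps eps0 eps_bound] : exists2 eps, decr_to_zero eps &
    forall n x, rho 0 x <= r1 -> d 0 (S n x) <= eps n.
  apply: decr_to_zero_tail_sup.
  - by exists 0; rewrite metric_xx // ltW.
  - move=> n x xr1; rewrite metric_ge0 //=; case: (ltnP n N1) => nN1.
      exact: Hr1.
    by apply: HN1 => //; apply: le_trans r1r.
  - move=> c c0; have [N HN] := Ur c c0; exists N => n x Nn xr1.
    by apply: HN => //; apply: le_trans r1r.
by exists eps; split => //; exists r1 => // n x; exact: eps_bound.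
Qed.

Section FromRate.
Variables (eps : nat -> R) (r0 : R).
Hypotheses (eps0 : decr_to_zero eps) (r0_gt0 : 0 < r0)
  (rate : forall n x, cball rho 0 r0 x -> cball d 0 (eps n) (Tn n x - T x)).

Lemma rate_pointwise_bound (rho_scale : scale_continuous rho) x :
  exists k : nat, forall n, d 0 (S n x) <= eps n *+ k.
Proof.
have [k k0 hk] := scale_continuous_absorbing x rho_metric rho_scale r0_gt0.
exists k => n; have -> : x = k%:R *: (k%:R^-1 *: x).
  by rewrite scalerA divff ?scale1r // pnatr_eq0 -lt0n.
rewrite linearZ /= scaler_nat; apply: le_trans (tinv_dist0Mn d_metric d_tinv _ _) _.
by rewrite lerMn2r (rate n hk) orbT.
Qed.

Lemma rate_pointwise (rho_scale : scale_continuous rho) :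
  pointwise_conv d (fun n => Tn n : X -> Y) T.
Proof.
move=> x e e0; have [k hk] := rate_pointwise_bound rho_scale x.
have [_ [_ eps_lim]] := eps0.
have [N HN] := eps_lim _ (divr_gt0 e0 (ltr0Sn R k)); exists N => n Nn.
rewrite dist_Tn_T; apply: le_lt_trans (hk n) _.
apply: le_lt_trans (_ : eps n *+ k <= eps n *+ k.+1) _.
  by rewrite mulrS lerDr; case: eps0.
by rewrite -mulr_natr -ltr_pdivlMr ?ltr0Sn // HN.
Qed.

Lemma rate_not_aas (rho_scale : scale_continuous rho) :
  ~ aas_conv d (fun n => Tn n : X -> Y) T.
Proof.
have [eps' eps'0 eps_slower] := decr_to_zero_slower eps0.
move=> [_ /(_ _ eps'0) [x hx]].
have [k hk] := rate_pointwise_bound rho_scale x.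
have [N HN] := eps_slower k; have [n Nn] := hx N.
by rewrite dist_Tn_T leNgt (le_lt_trans (hk n) (HN n Nn)).
Qed.

Lemma rate_bounded_conv (d_nondecr : nondecreasing_metric d) :
  bounded_conv rho d (fun n => Tn n : X -> Y) T.
Proof.
move=> A A_bd e e0; have [lam lam0 A_ball] := A_bd _ r0_gt0.
have [k lamk] := exists_nat_gt lam.
have k0 : 0 < k%:R :> R by apply: lt_trans lamk.
have [_ [_ eps_lim]] := eps0.
have [N HN] := eps_lim _ (divr_gt0 e0 k0); exists N => n Nn _ /A_ball [z z_ball ->].
rewrite dist_Tn_T linearZ /=.
have -> : lam *: S n z = (lam / k%:R) *: (k%:R *: S n z).
  by rewrite scalerA divfK // gt_eqF.
rewrite metric_sym //; apply: le_lt_trans (d_nondecr _ _ _) _.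
  by rewrite divr_ge0 ?ler0n ?(ltW lam0) //= ler_pdivrMr // mul1r ltW.
rewrite metric_sym // scaler_nat; apply: le_lt_trans (tinv_dist0Mn d_metric d_tinv _ _) _.
apply: le_lt_trans (_ : eps n *+ k < e); first by rewrite lerMn2r (rate n z_ball) orbT.
by rewrite -mulr_natr -ltr_pdivlMr // HN.
Qed.

End FromRate.

Section GlidingHump.
Variable eps : nat -> R.
Hypotheses (eps0 : decr_to_zero eps) (rho_complete : complete_metric rho)
  (pointwise : pointwise_conv d (fun n => Tn n : X -> Y) T)
  (nonunif : forall r, 0 < r -> ~ unif_conv_ball r).

Lemma nonunif_witness r : 0 < r -> exists2 c, 0 < c &
  forall N, exists n x, [/\ (N <= n)%N, rho 0 x <= r & c < d 0 (S n x)].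
Proof.
move=> /nonunif nU; apply: contrapT => nc; apply: nU => c c0.
apply: contrapT => nN; apply: nc; exists c => // N.
apply: contrapT => nn; apply: nN; exists N => n Nn x xr.
by rewrite leNgt; apply/negP => hc; apply: nn; exists n, x.
Qed.

Record hump_state := HumpState { center : X; radius : R; index : nat }.

(* The hump of [S (index q)] is uniformly large on the ball around
   [center q] of radius [2 * radius q], which will contain the limit point. *)
Definition hump_next (p q : hump_state) :=
  [/\ rho (center p) (center q) <= radius p, radius q <= radius p / 2,
      (index p < index q)%N &
      forall z, cball rho (center q) (2 * radius q) z ->
        eps (index q) < d 0 (S (index q) z)].

(* Pick [n] with [d 0 (S n x) > c] for some [x] in the ball, [d 0 (S n (center p))
   < c / 4] and [eps n < c / 2]; continuity of [S n] at [0] then keeps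
   [d 0 (S n z) > c / 2] for [z] near [center p + x]. *)
Lemma hump_step p : 0 < radius p -> exists2 q, 0 < radius q & hump_next p q.
Proof.
move=> r0; have [c c0 hc] := nonunif_witness r0.
have c4 : 0 < c / 4 by rewrite divr_gt0.
have [N1 HN1] := pointwise (center p) c4.
have [_ [_ eps_lim]] := eps0; have [N2 HN2] := eps_lim (c / 2) (divr_gt0 c0 (ltr0Sn R 1)).
have [n [x [+ xr hx]]] := hc (maxn (index p).+1 (maxn N1 N2)).
rewrite !geq_max => /and3P[pn N1n N2n].
have [del del0 Hdel] := diff_continuous0 n c4.
pose r' := Num.min (radius p / 2) (del / 4).
have r'_half : r' <= radius p / 2 by rewrite ge_min lexx.
have r'_del : r' <= del / 4 by rewrite ge_min lexx orbT.
exists (HumpState (center p + x) r' n); first by rewrite lt_min !divr_gt0.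
split => //=; first by rewrite tinv_distE // addrAC subrr add0r.
move=> z; rewrite /cball tinv_distE // => zr'.
have hSy : d 0 (S n (z - (center p + x))) < c / 4 by apply: Hdel; lra.
have hSp : d 0 (S n (center p)) < c / 4 by rewrite -dist_Tn_T; exact: HN1.
have Sx_eq (f : {linear X -> Y}) : f x = f z - f (center p) - f (z - (center p + x)).
  by rewrite (raddfB f z) (raddfD f) opprB addrA subrKA addrAC subrr add0r.
have : d 0 (S n x) <= d 0 (S n z) + d 0 (S n (center p)) + d 0 (S n (z - (center p + x))).
  rewrite (Sx_eq (S n)); apply: le_trans (tinv_dist0D d_metric d_tinv _ _) _.
  rewrite tinv_dist0N //; apply: lerD => //.
  by apply: le_trans (tinv_dist0D d_metric d_tinv _ _) _; rewrite tinv_dist0N.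
have := HN2 _ N2n; lra.
Qed.

Lemma gliding_hump :
  exists x, forall N, exists2 n, (N <= n)%N & eps n <= d (Tn n x) (T x).
Proof.
have [f _ f_next] := @dependent_choice _ (fun p => 0 < radius p) hump_next
  (HumpState 0 1 0) ltr01 hump_step.
pose s k := center (f k); pose r k := radius (f k).
have r_gt0 k : 0 < r k by case: (f_next k).
have r_half k : r k.+1 <= r k / 2 by case: (f_next k) => _ [].
have s_step k : rho (s k) (s k.+1) <= r k by case: (f_next k) => _ [].
have [x sx] := rho_complete (halving_cauchy rho_metric r_gt0 r_half s_step).
have index_ge k : (k <= index (f k))%N.
  by elim: k => // k IH; case: (f_next k) => _ [_ _ lt _]; exact: leq_ltn_trans IH lt.
exists x => N; first exists (index (f N.+1)).
  exact: leq_trans (leqnSn N) (index_ge _).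
rewrite dist_Tn_T; apply/ltW; case: (f_next N) => _ [_ _ _]; apply.
apply: (cball_closed rho_metric sx (N := N.+1)) => k Nk.
exact: (halving_dist_le rho_metric r_gt0 r_half s_step Nk).
Qed.

End GlidingHump.

Lemma not_aas_rate : complete_metric rho ->
  pointwise_conv d (fun n => Tn n : X -> Y) T ->
  ~ aas_conv d (fun n => Tn n : X -> Y) T -> rate_on_ball.
Proof.
move=> rho_complete pw naas; apply: contrapT => nrate; apply: naas; split => // eps eps0.
apply: gliding_hump => // r r0 Ur; apply: nrate; exact: unif_conv_ball_rate Ur.
Qed.

Lemma bounded_conv_rate : locally_bounded rho ->
  bounded_conv rho d (fun n => Tn n : X -> Y) T -> rate_on_ball.
Proof.
move=> [r r0 ball_bd] bc; apply: (unif_conv_ball_rate r0) => c c0.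
have [N HN] := bc _ ball_bd c c0; exists N => n Nn x xr.
by rewrite -dist_Tn_T; apply/ltW/HN.
Qed.

End Operators.

Unset Implicit Arguments.

Theorem mainTheorem10 (R : realType) (X Y : lmodType R)
  (rho : X -> X -> R) (d : Y -> Y -> R)
  (T : {linear X -> Y}) (Tn : nat -> {linear X -> Y}) :
  is_Fspace rho ->
  is_tinv_metric_vector_space d ->
  nondecreasing_metric d ->
  continuous_op rho d T ->
  (forall n, continuous_op rho d (Tn n)) ->
  let cond_i := pointwise_conv d (fun n => Tn n : X -> Y) T /\
                ~ aas_conv d (fun n => Tn n : X -> Y) T in
  let cond_ii := exists eps : nat -> R, decr_to_zero eps /\
      exists2 r0 : R, 0 < r0 &
        forall n x, cball rho 0 r0 x -> cball d 0 (eps n) (Tn n x - T x) in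
  let cond_iii := bounded_conv rho d (fun n => Tn n : X -> Y) T in
  [/\ cond_i <-> cond_ii,
      cond_i -> cond_iii &
      locally_bounded rho -> (cond_i <-> cond_iii) /\ (cond_ii <-> cond_iii)].
Proof.
move=> [[rhoM rhoT rhoS] rhoC] [dM dT _] d_nondecr T_cont Tn_cont cond_i cond_ii cond_iii.
have i_ii : cond_i -> cond_ii.
  by case=> pw naas; exact: (not_aas_rate rhoM rhoT dM dT T_cont Tn_cont).
have ii_i : cond_ii -> cond_i.
  case=> eps [eps0 [r0 r0_gt0 rate]]; split.
    exact: (rate_pointwise rhoM dM dT eps0 r0_gt0 rate rhoS).
  exact: (rate_not_aas rhoM dM dT eps0 r0_gt0 rate rhoS).
have ii_iii : cond_ii -> cond_iii.
  case=> eps [eps0 [r0 r0_gt0 rate]].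
  exact: (rate_bounded_conv dM dT eps0 r0_gt0 rate d_nondecr).
split=> [|/i_ii/ii_iii //|lb]; first by split.
have iii_ii : cond_iii -> cond_ii.
  exact: (bounded_conv_rate rhoM dM dT T_cont Tn_cont lb).
split; split.
- by move/i_ii/ii_iii.
- by move/iii_ii/ii_i.
- exact: ii_iii.
- exact: iii_ii.
Qed.
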